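(* Let $K$ be any field, let $u(x,y)\in K[x,y]\setminus K$, and let $\rho=(\alpha x+p(y),\beta y+\gamma)$ be a nonaffine triangular automorphism of $K[x,y]$, where $\alpha,\beta\in K\setminus\{0\}$, $\gamma\in K$ and $p(y)\in K[y]$ has degree at least $2$. Let $\tau=(y,x)$, so that $\tau\rho u=u(\alpha y+p(x),\beta x+\gamma)$. Then each of the following statements implies the next: (i) $u$ is biased; (ii) $\deg u<\deg(\tau\rho u)$; (iii) $\deg u\le\deg(\tau\rho u)$; (iv) $\tau\rho u$ is biased.
   Context: An automorphism $\varphi=(f,g)$ of $K[x,y]$ means $\varphi x=f$, $\varphi y=g$, and $\varphi u=u(f,g)$; composition is $(c,d)(a,b)=(a(c,d),b(c,d))$. $\deg$ denotes total degree. For $0\ne u\in K[x,y]$, $|u|$ denotes the homogeneous component of $u$ of maximal total degree, and $u$ is called biased if $\deg_x|u|\ge\deg_y|u|$, where $\deg_x,\deg_y$ are the degrees in $x$ and in $y$. *)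

From HB Require Import structures.
From mathcomp Require Import all_boot all_order all_algebra.
From mathcomp Require Export mpoly.
Set Implicit Arguments. Unset Strict Implicit. Unset Printing Implicit Defensive.
Import GRing.Theory.
Local Open Scope ring_scope.

Section Defs.
Variable K : fieldType.

Definition vx : {mpoly K[2]} := 'X_(0 : 'I_2).
Definition vy : {mpoly K[2]} := 'X_(1 : 'I_2).

(* total degree (deg 0 = 0, irrelevant here since u is nonconstant) *)
Definition tdeg (u : {mpoly K[2]}) : nat := (msize u).-1.

Definition topc (u : {mpoly K[2]}) : {mpoly K[2]} := pihomog mdeg (tdeg u) u.

Definition degv (i : 'I_2) (u : {mpoly K[2]}) : nat :=
  \max_(m <- msupp u) m i.

Definition deg_x (u : {mpoly K[2]}) := degv 0 u.
Definition deg_y (u : {mpoly K[2]}) := degv 1 u.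

Definition biased (u : {mpoly K[2]}) : bool :=
  (deg_y (topc u) <= deg_x (topc u))%N.

Definition aut_app (f g u : {mpoly K[2]}) : {mpoly K[2]} :=
  u \mPo [tuple f; g].

Definition peval (q : {poly K}) (w : {mpoly K[2]}) : {mpoly K[2]} :=
  (map_poly (@mpolyC 2 K) q).[w].

End Defs.

From HB Require Import structures.
From mathcomp Require Import all_boot all_order all_algebra.
From mathcomp Require Import mpoly.
From mathcomp Require Import zify ring.
Import GRing.Theory.
Set Implicit Arguments. Unset Strict Implicit.

Local Open Scope ring_scope.

(* Write tau rho = (al x_j + P(x_i), be x_i + ga), {i, j} = {x, y}, with
   d = deg P >= 2 and c the leading coefficient of P.  Giving x_i weight 1 and
   x_j weight d, the leading part of this pair is (al x_j + c x_i^d, be x_i),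
   so the leading part of f(tau rho) is F(al x_j + c x_i^d, be x_i), where F is
   the part of f of largest weight N when x_i has weight d and x_j weight 1.
   At x_i = 1 it becomes (al t + c)^e nu(t), with e the least x_i-degree in F
   and deg nu = deg_i F - e, so it has a nonzero coefficient of some index
   a <= deg_i F - e.  The matching monomial x_i^(N - d a) x_j^a of f(tau rho)
   has total degree N - (d - 1) a, which exceeds deg f when deg_j |f| <= deg_i |f|.
   For (iii) -> (iv): the inverse of tau rho has the same shape with x and y
   exchanged, so if tau rho u were not biased then deg (tau rho u) < deg u. *)

Lemma bigmax_seq_attained (T : eqType) (s : seq T) (F : T -> nat) :
  s != [::] -> exists2 x, x \in s & (\max_(y <- s) F y)%N = F x.
Proof.
elim: s => // a s IHs _; rewrite big_cons.
have [->|/IHs [x xs ->]] := eqVneq s [::].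
  by exists a; rewrite ?big_nil ?maxn0 ?mem_head.
have [leFxa|ltFax] := leqP (F x) (F a).
  by exists a; rewrite ?mem_head // (maxn_idPl leFxa).
by exists x; rewrite ?inE ?xs ?orbT // (maxn_idPr (ltnW ltFax)).
Qed.

Section Measures.
Variables (n : nat) (R : comNzRingType) (mf : measure n).
Implicit Types (p q A B : {mpoly R[n]}) (m : 'X_{1..n}).

Lemma mmeasure_attained p :
  p != 0 -> exists2 m, m \in msupp p & mmeasure mf p = (mf m).+1.
Proof. by rewrite -msupp_eq0 mmeasureE; apply: bigmax_seq_attained. Qed.

Lemma mmeasureM_le p q :
  (mmeasure mf (p * q) <= (mmeasure mf p + mmeasure mf q).-1)%N.
Proof.
rewrite [X in (X <= _)%N]mmeasureE; apply/bigmax_leqP_seq => m /msuppM_le + _.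
case/allpairsP => -[m1 m2] /= [/(mmeasure_mnm_lt mf) lt1 /(mmeasure_mnm_lt mf) lt2 ->].
by rewrite mfD; lia.
Qed.

Lemma mmeasure_homog w p : p \is w.-homog for mf -> (mmeasure mf p <= w.+1)%N.
Proof.
by move=> /dhomogP homp; rewrite mmeasureE; apply/bigmax_leqP_seq => m /homp ->.
Qed.

Lemma mcoeff_pihomog d p m :
  (pihomog mf d p)@_m = if mf m == d then p@_m else 0.
Proof.
case: eqP => [<-|/eqP ne_m]; last exact: dhomog_nemf_coeff (pihomogP _ _ _) ne_m.
pose k := maxn (mmeasure mf p) (mf m).+1.
rewrite {2}(pihomog_partitionE (leq_maxl _ _ : (mmeasure mf p <= k)%N)) [RHS]raddf_sum.
rewrite (bigD1 (Ordinal (leq_maxr _ _ : (mf m < k)%N))) //= big1 ?addr0 // => d' ne_d.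
by apply: dhomog_nemf_coeff (pihomogP _ _ _) _; rewrite eq_sym -val_eqE in ne_d.
Qed.

Lemma msupp_pihomog d p m :
  (m \in msupp (pihomog mf d p)) = (mf m == d) && (m \in msupp p).
Proof. by rewrite !mcoeff_msupp mcoeff_pihomog; case: (mf m =P d); rewrite ?eqxx. Qed.

Lemma pihomog_mmeasure_neq0 p : p != 0 -> pihomog mf (mmeasure mf p).-1 p != 0.
Proof.
case/mmeasure_attained => m m_p ->; rewrite -msupp_eq0 /=; apply/eqP => supp0.
have : m \in msupp (pihomog mf (mf m) p) by rewrite msupp_pihomog eqxx.
by rewrite supp0.
Qed.

(* [A'] is the part of weight [w] of [A], and [A] has no monomial of larger
   weight ([mmeasure] is one more than the largest weight). *)
Definition lead_part w A A' :=
  (A' \is w.-homog for mf) && (mmeasure mf (A - A') <= w)%N.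

Lemma lead_part_mmeasure w A A' : lead_part w A A' -> (mmeasure mf A <= w.+1)%N.
Proof.
case/andP => /mmeasure_homog homA' lowA; rewrite -(subrK A' A).
by apply: leq_trans (mmeasureD_le _ _ _) _; rewrite geq_max homA' (leqW lowA).
Qed.

Lemma lead_part_mcoeff w A A' m :
  lead_part w A A' -> (w <= mf m)%N -> A@_m = A'@_m.
Proof.
case/andP => _ lowA le_w_m; apply/eqP; rewrite -subr_eq0 -mcoeffB.
by apply/eqP/memN_msupp_eq0/mmeasure_mnm_ge/(leq_trans lowA).
Qed.

Lemma lead_part_homog w A : A \is w.-homog for mf -> lead_part w A A.
Proof. by rewrite /lead_part subrr mmeasure0 andbT. Qed.

Lemma lead_part0 w A : (mmeasure mf A <= w)%N -> lead_part w A 0.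
Proof. by rewrite /lead_part subr0 dhomog0 => ->. Qed.

Lemma lead_part1 : lead_part 0 1 1.
Proof. by rewrite /lead_part subrr mmeasure0 dhomog1. Qed.

Lemma lead_partD w A A' B B' :
  lead_part w A A' -> lead_part w B B' -> lead_part w (A + B) (A' + B').
Proof.
case/andP => homA lowA /andP[homB lowB]; rewrite /lead_part rpredD //=.
rewrite opprD addrACA; apply: leq_trans (mmeasureD_le _ _ _) _.
by rewrite geq_max lowA lowB.
Qed.

Lemma lead_partZ w c A A' : lead_part w A A' -> lead_part w (c *: A) (c *: A').
Proof.
case/andP => homA lowA; rewrite /lead_part rpredZ //= -scalerBr.
exact: leq_trans (mmeasureZ_le _ _ _) lowA.
Qed.

Lemma lead_partM a b A A' B B' :
  lead_part a A A' -> lead_part b B B' -> lead_part (a + b) (A * B) (A' * B').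
Proof.
move=> leadA leadB; have /andP[homA lowA] := leadA; have /andP[homB lowB] := leadB.
rewrite /lead_part dhomogM //=.
have -> : A * B - A' * B' = (A - A') * B + A' * (B - B') by ring.
apply: leq_trans (mmeasureD_le _ _ _) _; rewrite geq_max.
have := mmeasureM_le (A - A') B; have := mmeasureM_le A' (B - B').
have := lead_part_mmeasure leadB; have := mmeasure_homog homA; lia.
Qed.

Lemma lead_partX w k A A' :
  lead_part w A A' -> lead_part (k * w) (A ^+ k) (A' ^+ k).
Proof.
move=> leadA; elim: k => [|k IHk]; first by rewrite !expr0 mul0n lead_part1.
by rewrite !exprS mulSn; apply: lead_partM.
Qed.

Lemma lead_part_sum (I : Type) (r : seq I) (P : pred I) w F F' :
  (forall x, P x -> lead_part w (F x) (F' x)) ->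
  lead_part w (\sum_(x <- r | P x) F x) (\sum_(x <- r | P x) F' x).
Proof.
apply: (big_ind2 (lead_part w)); last exact: lead_partD.
by apply: lead_part0; rewrite mmeasure0.
Qed.

End Measures.

Section Composition.
Variables (n k : nat) (R : comNzRingType) (mf : measure n) (mg : measure k).
Variables (T T' : n.-tuple {mpoly R[k]}).
Hypothesis lead_T : forall i, lead_part mg (mf U_(i)%MM) (tnth T i) (tnth T' i).

Lemma lead_part_comp_mpolyX m :
  lead_part mg (mf m) ('X_[m] \mPo T) ('X_[m] \mPo T').
Proof.
rewrite !comp_mpolyX mfE.
apply: (big_ind3 (fun A A' w => lead_part mg w A A')) => [|*|i _].
- exact: lead_part1.
- exact: lead_partM.
- exact: lead_partX.
Qed.

Lemma lead_part_comp_mpoly N p : (mmeasure mf p <= N.+1)%N ->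
  lead_part mg N (p \mPo T) (pihomog mf N p \mPo T').
Proof.
move=> le_p_N; rewrite comp_mpolyEX pihomogE raddf_sum (bigID (fun m => mf m == N)) /=.
rewrite -[X in lead_part _ _ _ X]addr0; apply: lead_partD.
  apply: lead_part_sum => m /eqP <-; rewrite comp_mpolyZ.
  exact/lead_partZ/lead_part_comp_mpolyX.
apply/lead_part0/(leq_trans (mmeasure_sum _ _ _ _))/bigmax_leqP_seq => m.
move=> /(mmeasure_mnm_lt mf) lt_m neq_m; apply: leq_trans (mmeasureZ_le _ _ _) _.
have := lead_part_mmeasure (lead_part_comp_mpolyX m); move: neq_m; lia.
Qed.

End Composition.

Lemma comp_mpolyA n k l (R : comNzRingType) (u : {mpoly R[n]})
    (T : n.-tuple {mpoly R[k]}) (S : k.-tuple {mpoly R[l]}) :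
  (u \mPo T) \mPo S = u \mPo [tuple tnth T i \mPo S | i < n].
Proof.
rewrite (comp_mpolyEX u T) (comp_mpolyEX u) raddf_sum; apply: eq_bigr => m _.
rewrite /= comp_mpolyZ !comp_mpolyX rmorph_prod; congr (_ *: _).
by apply: eq_bigr => i _; rewrite rmorphXn tnth_mktuple.
Qed.

Definition wdeg n (i : 'I_n) (d : nat) (m : 'X_{1..n}) : nat :=
  (\sum_(k < n) m k * (if k == i then d else 1))%N.

Lemma wdeg0 n (i : 'I_n) d : wdeg i d 0%MM = 0%N.
Proof. by rewrite /wdeg big1 // => k _; rewrite mnm0E. Qed.

Lemma wdegD n (i : 'I_n) d :
  {morph wdeg i d : m1 m2 / (m1 + m2)%MM >-> (m1 + m2)%N}.
Proof.
by move=> m1 m2; rewrite /wdeg -big_split; apply: eq_bigr => k _; rewrite mnmDE mulnDl.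
Qed.

HB.instance Definition _ n (i : 'I_n) d :=
  isMeasure.Build n (wdeg i d) (wdeg0 i d) (wdegD i d).

Lemma wdegU n (i k : 'I_n) d : wdeg i d U_(k)%MM = if k == i then d else 1%N.
Proof.
rewrite /wdeg (bigD1 k) //= mnm1E eqxx mul1n big1 ?addn0 // => l /negbTE nlk.
by rewrite mnm1E eq_sym nlk.
Qed.

Section UnivariatePolynomials.
Variable F : fieldType.
Implicit Types (q : {poly F}) (a b : F).

Lemma mup_lt_size x q : q != 0 -> (mup x q < size q)%N.
Proof.
move=> nz_q; have dvd_q : ('X - x%:P) ^+ mup x q %| q by rewrite -mup_geq.
by have := dvdp_leq nz_q dvd_q; rewrite size_exp_XsubC.
Qed.

Lemma coef_mup0_neq0 q : q != 0 -> q`_(mup 0 q) != 0.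
Proof.
move=> nz_q; have /dvdpP [q' qE] : ('X - 0%:P) ^+ mup 0 q %| q by rewrite -mup_geq.
have nz_q' : q' != 0 by apply: contraNneq nz_q => q'0; rewrite qE q'0 mul0r.
have : mup 0 q = (mup 0 q' + mup 0 q)%N.
  by rewrite {1}qE mupM ?expf_neq0 ?polyXsubC_eq0 // mup_XsubCX eqxx.
rewrite -{1}[mup 0 q]add0n => /addIn/esym/eqP.
rewrite -leqn0 mup_leq // expr1 -root_factor_theorem.
by rewrite {1}qE subr0 coefMXn ltnn subnn -horner_coef0.
Qed.

Lemma size_linear a b : a != 0 -> size (a *: 'X + b%:P) = 2%N.
Proof. by move=> nz_a; rewrite -mul_polyC size_MXaddC polyC_eq0 (negbTE nz_a) size_polyC nz_a. Qed.

Lemma size_exp_linear a b l : a != 0 -> size ((a *: 'X + b%:P) ^+ l) = l.+1.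
Proof.
move=> nz_a; have nz_lin : a *: 'X + b%:P != 0 by rewrite -size_poly_gt0 size_linear.
by rewrite -[LHS]prednK ?size_poly_gt0 ?expf_neq0 // size_exp size_linear // mul1n.
Qed.

Lemma coef_exp_linear a b l : a != 0 -> ((a *: 'X + b%:P) ^+ l)`_l = a ^+ l.
Proof.
move=> nz_a; rewrite -[X in _`_X]/(l.+1.-1) -(size_exp_linear b l nz_a).
rewrite -lead_coefE lead_coef_exp lead_coefDl ?lead_coefZ ?lead_coefX ?mulr1 //.
by rewrite size_scale ?size_polyX ?size_polyC //; case: (b != 0).
Qed.

End UnivariatePolynomials.

Section BivariateDegrees.
Variable K : fieldType.
Implicit Types (f : {mpoly K[2]}) (m : 'X_{1..2}).

Lemma degv_ge k f m : m \in msupp f -> (m k <= degv k f)%N.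
Proof. by move=> m_f; apply: leq_bigmax_seq. Qed.

Lemma degv_attained k f : f != 0 -> exists2 m, m \in msupp f & degv k f = m k.
Proof. by rewrite -msupp_eq0; apply: bigmax_seq_attained. Qed.

Lemma mdeg_le_tdeg f m : m \in msupp f -> (mdeg m <= tdeg f)%N.
Proof. by move=> /msize_mdeg_lt; rewrite /tdeg; case: (msize f). Qed.

Lemma tdeg_gt0 f : (forall c : K, f != c%:MP) -> (0 < tdeg f)%N.
Proof.
move=> nonconst_f; rewrite lt0n; apply: contraTneq (nonconst_f f@_0) => tdeg0.
by rewrite negbK; apply/eqP/msize1_polyC; move: tdeg0; rewrite /tdeg; case: (msize f) => [|[]].
Qed.

Lemma top_monomial_biased (i j : 'I_2) f : f != 0 ->
    (degv j (topc f) <= degv i (topc f))%N ->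
  exists2 s, s \in msupp f & (mdeg s == tdeg f) && (s j <= s i)%N.
Proof.
move=> /(pihomog_mmeasure_neq0 mdeg) nz_top biased_f.
have [s s_top s_i] := degv_attained i nz_top; exists s.
  by move: s_top; rewrite msupp_pihomog => /andP[].
move: (s_top); rewrite msupp_pihomog => /andP[-> _] /=.
by rewrite -s_i (leq_trans (degv_ge j s_top)).
Qed.

End BivariateDegrees.

Section Substitution.
Variable K : fieldType.
Implicit Types (P Q : {poly K}) (w : {mpoly K[2]}).

Lemma peval_sum P w : peval P w = \sum_(l < size P) P`_l *: w ^+ l.
Proof.
rewrite /peval horner_coef size_map_inj_poly //; last exact: (can_inj (@mpolyCK 2 K)).
by apply: eq_bigr => l _; rewrite coef_map_id0 ?mul_mpolyC.
Qed.

Lemma pevalZ c P w : peval (c *: P) w = c *: peval P w.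
Proof. by rewrite /peval map_polyZ hornerZ mul_mpolyC. Qed.

Lemma peval_comp_poly P Q w : peval (P \Po Q) w = peval P (peval Q w).
Proof. by rewrite /peval map_comp_poly horner_comp. Qed.

Lemma peval_linear a b w : peval (a *: 'X + b%:P) w = a *: w + b%:MP.
Proof. by rewrite /peval rmorphD /= map_polyZ map_polyX map_polyC !hornerE mul_mpolyC. Qed.

Lemma peval_comp_mpoly P w (S : 2.-tuple {mpoly K[2]}) :
  peval P w \mPo S = peval P (w \mPo S).
Proof.
rewrite !peval_sum raddf_sum; apply: eq_bigr => l _.
by rewrite /= comp_mpolyZ rmorphXn.
Qed.

Lemma lead_part_peval (mf : measure 2) (k : 'I_2) P :
  mf U_(k)%MM = 1%N ->
  lead_part mf (size P).-1 (peval P 'X_k) (lead_coef P *: 'X_k ^+ (size P).-1).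
Proof.
move=> mfk; have [->|nzP] := eqVneq P 0.
  by rewrite /peval map_poly0 horner0 lead_coef0 scale0r; apply/lead_part0; rewrite mmeasure0.
have homX l : ('X_k : {mpoly K[2]}) ^+ l \is l.-homog for mf.
  by rewrite -[X in X.-homog for mf]mul1n; apply: dhomogMn; rewrite dhomogX mfk.
rewrite /lead_part rpredZ //= peval_sum lead_coefE.
move: nzP; rewrite -size_poly_eq0; case: (size P) => // d _ /=.
rewrite big_ord_recr /= addrK; apply: leq_trans (mmeasure_sum _ _ _ _) _.
apply/bigmax_leqP_seq => l _ _; apply: leq_trans (mmeasureZ_le _ _ _) _.
exact: leq_trans (mmeasure_homog (homX l)) (ltn_ord l).
Qed.

End Substitution.

Lemma lt_tdeg_arith d N I e ej si sj ri rj :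
    (1 < d)%N -> (ri + d * rj)%N = N -> (d * e + ej)%N = N -> (d * si + sj <= N)%N ->
    (e + ej <= si + sj)%N -> (sj <= si)%N -> (0 < si + sj)%N -> (rj + e <= I)%N ->
    (d * I <= N)%N ->
  (si + sj < ri + rj)%N.
Proof.
move=> d_gt1 rE eE sN eS sji s_pos rI IN.
have si_le_e : (si <= e)%N by nia.
nia.
Qed.

Section TwoVariables.
Variables (K : fieldType) (i j : 'I_2).
Hypothesis neq_ij : i != j.

Lemma ord2_neq_i k : (k != i) = (k == j).
Proof. by move: neq_ij; case: i j k => [[|[|//]] ?] [[|[|//]] ?] [[|[|//]] ?]. Qed.

Lemma big_ord2_ij (R : Type) (idx : R) (op : Monoid.com_law idx) (F : 'I_2 -> R) :
  \big[op/idx]_(k < 2) F k = op (F i) (F j).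
Proof.
rewrite (bigD1 i) //= (bigD1 j) 1?ord2_neq_i //= big1 ?Monoid.mulm1 // => k.
by rewrite ord2_neq_i => /andP[/eqP-> /negP].
Qed.

Lemma mnm2_eq (m m' : 'X_{1..2}) : m i = m' i -> m j = m' j -> m = m'.
Proof.
move=> eqi eqj; apply/mnmP => k.
by case: (eqVneq k i) => [->|]; rewrite ?ord2_neq_i // => /eqP->.
Qed.

Lemma mdeg2 (m : 'X_{1..2}) : mdeg m = (m i + m j)%N.
Proof. by rewrite mdegE big_ord2_ij. Qed.

Lemma wdeg_ij d (m : 'X_{1..2}) : wdeg i d m = (d * m i + m j)%N.
Proof. by rewrite /wdeg big_ord2_ij eqxx eq_sym (negbTE neq_ij) mulnC muln1. Qed.

Lemma wdeg_ji d (m : 'X_{1..2}) : wdeg j d m = (m i + d * m j)%N.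
Proof. by rewrite /wdeg big_ord2_ij eqxx (negbTE neq_ij) muln1 mulnC. Qed.

Lemma homog_wdeg_ij d N (p : {mpoly K[2]}) m :
  p \is N.-homog for (wdeg i d) -> m \in msupp p -> (d * m i + m j)%N = N.
Proof. by move=> /dhomogP homp /homp; rewrite /= wdeg_ij. Qed.

Lemma homog_wdeg_le_swap d N (p : {mpoly K[2]}) m m' : (0 < d)%N ->
    p \is N.-homog for (wdeg i d) -> m \in msupp p -> m' \in msupp p ->
  (m j <= m' j)%N -> (m' i <= m i)%N.
Proof.
move=> d_gt0 homp /(homog_wdeg_ij homp) wm /(homog_wdeg_ij homp) wm' le_j.
by rewrite -(leq_pmul2l d_gt0); lia.
Qed.

Definition triangular_top (al be c : K) (d : nat) : 2.-tuple {mpoly K[2]} :=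
  [tuple if k == i then al *: 'X_j + c *: 'X_i ^+ d else be *: 'X_i | k < 2].

Lemma lead_part_triangular (al be ga : K) (P : {poly K}) (T : 2.-tuple {mpoly K[2]}) :
    tnth T i = al *: 'X_j + peval P 'X_i -> tnth T j = be *: 'X_i + ga%:MP ->
  forall k, lead_part (wdeg j (size P).-1) (wdeg i (size P).-1 U_(k)%MM) (tnth T k)
    (tnth (triangular_top al be (lead_coef P) (size P).-1) k).
Proof.
move=> Ti Tj k; set d := (size P).-1.
have wdegUi : wdeg j d U_(i)%MM = 1%N by rewrite wdegU (negbTE neq_ij).
have wdegUj : wdeg j d U_(j)%MM = d by rewrite wdegU eqxx.
have homXi : ('X_i : {mpoly K[2]}) \is 1.-homog for (wdeg j d) by rewrite dhomogX; apply/eqP.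
rewrite tnth_mktuple wdegU; case: (eqVneq k i) => [->|]; last first.
  rewrite ord2_neq_i => /eqP->; rewrite Tj -[X in lead_part _ _ _ X]addr0.
  apply: lead_partD; first exact/lead_part_homog/rpredZ.
  by apply: lead_part0; rewrite mmeasureC leq_b1.
rewrite Ti; apply: lead_partD; last exact: lead_part_peval.
by apply/lead_part_homog/rpredZ; rewrite dhomogX; apply/eqP.
Qed.

Definition dehomog (p : {mpoly K[2]}) : {poly K} :=
  mmap (@polyC K) (fun k => if k == j then 'X else 1) p.

Lemma dehomog_coef_neq0 p a :
  (dehomog p)`_a != 0 -> exists2 r, p@_r != 0 & r j = a.
Proof.
move=> nz_pa; have /hasP [r r_p /eqP r_j] : has (fun r : 'X_{1..2} => r j == a) (msupp p).
  apply: contraR nz_pa => /hasPn r_neq; rewrite /dehomog /mmap coef_sum big1_seq // => r.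
  case/andP=> _ /r_neq; rewrite /mmap1 big_ord2_ij /= eqxx (negbTE neq_ij) expr1n mul1r.
  by rewrite coefCM coefXn eq_sym => /negbTE ->; rewrite mulr0.
by exists r; rewrite -?mcoeff_msupp.
Qed.

Lemma dehomog_comp_top (al be c : K) d F :
  dehomog (F \mPo triangular_top al be c d) =
  \sum_(m <- msupp F) (F@_m * be ^+ m j) *: (al *: 'X + c%:P) ^+ m i.
Proof.
rewrite /dehomog comp_mpolyEX raddf_sum; apply: eq_bigr => m _ /=.
rewrite mmapZ comp_mpolyX big_ord2_ij /= !tnth_mktuple eqxx eq_sym (negbTE neq_ij).
rewrite rmorphM !rmorphXn /= mmapD !mmapZ !rmorphXn /= !mmapX !mmap1U.
rewrite eqxx (negbTE neq_ij) expr1n !mulr1 -!mul_polyC polyCM rmorphXn /=; ring.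
Qed.

Lemma comp_top_mcoeff_neq0 (al be c : K) d N e F :
    al != 0 -> be != 0 -> c != 0 -> F != 0 -> F \is N.-homog for (wdeg i d) ->
    (forall m, m \in msupp F -> e <= m i)%N ->
  exists2 r, (F \mPo triangular_top al be c d)@_r != 0 & (r j + e <= degv i F)%N.
Proof.
move=> nz_al nz_be nz_c nz_F homF le_e; pose A : {poly K} := al *: 'X + c%:P.
pose nu := \sum_(m <- msupp F) (F@_m * be ^+ m j) *: A ^+ (m i - e).
have dehomE : dehomog (F \mPo triangular_top al be c d) = A ^+ e * nu.
  rewrite dehomog_comp_top /nu mulr_sumr big_seq [RHS]big_seq.
  by apply: eq_bigr => m /le_e le_e_m; rewrite -scalerAr -exprD subnKC.
have [mI mI_F degvE] := degv_attained i nz_F.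
have lt_mI m : m \in msupp F -> m != mI -> (m i < mI i)%N.
  move=> m_F; rewrite ltn_neqAle -{2}degvE degv_ge // andbT; apply: contra => /eqP eq_i.
  apply/eqP; apply: (mnm2_eq eq_i); apply/eqP; rewrite -(eqn_add2l (d * m i)).
  by rewrite (homog_wdeg_ij homF m_F) eq_i (homog_wdeg_ij homF mI_F).
have nz_nu : nu != 0.
  have : nu`_(mI i - e) = F@_mI * be ^+ mI j * al ^+ (mI i - e).
    rewrite /nu coef_sum (bigD1_seq mI) ?msupp_uniq //= coefZ coef_exp_linear //.
    rewrite big1_seq ?addr0 // => m /andP[ne_m m_F].
    rewrite coefZ nth_default ?mulr0 // size_exp_linear //.
    by have := lt_mI m m_F ne_m; have := le_e m m_F; lia.
  apply: contra_eq_neq => ->; rewrite coef0 eq_sym !mulf_neq0 ?expf_neq0 //.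
  by rewrite -mcoeff_msupp.
have size_nu : (size nu <= (mI i - e).+1)%N.
  apply: leq_trans (size_sum _ _ _) _; apply/bigmax_leqP_seq => m m_F _.
  apply: leq_trans (size_scale_leq _ _) _; rewrite size_exp_linear // ltnS leq_sub2r //.
  by rewrite -degvE degv_ge.
have nz_A : A != 0 by rewrite -size_poly_gt0 size_linear.
have nz_dehom : dehomog (F \mPo triangular_top al be c d) != 0.
  by rewrite dehomE mulf_neq0 ?expf_neq0.
have [r nz_r r_j] := dehomog_coef_neq0 (coef_mup0_neq0 nz_dehom).
exists r => //; rewrite r_j dehomE mupMr; last first.
  by rewrite rootE horner_exp /A !hornerE expf_neq0.
have := leq_trans (mup_lt_size 0 nz_nu) size_nu.
by rewrite ltnS degvE -(leq_add2r e) subnK ?le_e.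
Qed.

Lemma tdeg_lt_comp_triangular (al be ga : K) (P : {poly K}) (T : 2.-tuple {mpoly K[2]}) f :
    al != 0 -> be != 0 -> (2 < size P)%N ->
    tnth T i = al *: 'X_j + peval P 'X_i -> tnth T j = be *: 'X_i + ga%:MP ->
    (0 < tdeg f)%N -> (degv j (topc f) <= degv i (topc f))%N ->
  (tdeg f < tdeg (f \mPo T))%N.
Proof.
move=> nz_al nz_be size_P Ti Tj tdeg_f biased_f.
set d := (size P).-1; have d_gt1 : (1 < d)%N by rewrite /d; case: (size P) size_P.
have nz_c : lead_coef P != 0 by rewrite lead_coef_eq0 -size_poly_gt0 (ltn_trans _ size_P).
have nz_f : f != 0 by apply: contraTneq tdeg_f => ->; rewrite /tdeg msize0.
have [s s_f /andP[/eqP s_deg s_ji]] := top_monomial_biased nz_f biased_f.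
set N := (mmeasure (wdeg i d) f).-1; set F := pihomog (wdeg i d) N f.
have le_f_N : (mmeasure (wdeg i d) f <= N.+1)%N by rewrite /N; case: (mmeasure _ _).
have homF : F \is N.-homog for (wdeg i d) := pihomogP _ _ _.
have nz_F : F != 0 := pihomog_mmeasure_neq0 _ nz_f.
have [me me_F me_j] := degv_attained j nz_F.
have le_e m : m \in msupp F -> (me i <= m i)%N.
  by move=> m_F; rewrite (homog_wdeg_le_swap (ltnW d_gt1) homF m_F me_F) // -me_j degv_ge.
have [r nz_r r_j] := comp_top_mcoeff_neq0 nz_al nz_be nz_c nz_F homF le_e.
have lead_fT := lead_part_comp_mpoly (lead_part_triangular Ti Tj) le_f_N.
have wr : wdeg j d r = N by case/andP: lead_fT => /dhomogP -> //; rewrite mcoeff_msupp.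
have r_fT : r \in msupp (f \mPo T).
  by rewrite mcoeff_msupp (lead_part_mcoeff lead_fT (eq_leq (esym wr))).
apply: leq_trans (mdeg_le_tdeg r_fT); rewrite -s_deg !mdeg2.
have [mI mI_F mI_i] := degv_attained i nz_F.
have me_f : me \in msupp f by move: me_F; rewrite msupp_pihomog => /andP[].
have s_N : (d * s i + s j <= N)%N.
  by have := leq_trans (mmeasure_mnm_lt (wdeg i d) s_f) le_f_N; rewrite ltnS /= wdeg_ij.
apply: (@lt_tdeg_arith d N (degv i F) (me i) (me j)) => //.
- by rewrite -wdeg_ji.
- exact: homog_wdeg_ij homF me_F.
- by rewrite -!mdeg2 s_deg mdeg_le_tdeg.
- by rewrite -mdeg2 s_deg.
- by rewrite mI_i -(homog_wdeg_ij homF mI_F) leq_addr.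
Qed.

End TwoVariables.

Section TriangularInverse.
Variables (K : fieldType) (alpha beta gamma : K) (p : {poly K}).
Hypotheses (nz_alpha : alpha != 0) (nz_beta : beta != 0).

Definition inv_triangular_poly : {poly K} :=
  - alpha^-1 *: (p \Po (beta^-1 *: 'X + (- gamma / beta)%:P)).

Definition inv_triangular : 2.-tuple {mpoly K[2]} :=
  [tuple beta^-1 *: 'X_1 + (- gamma / beta)%:MP;
         alpha^-1 *: 'X_0 + peval inv_triangular_poly 'X_1].

Lemma size_inv_triangular_poly : size inv_triangular_poly = size p.
Proof.
rewrite size_scale ?oppr_eq0 ?invr_eq0 // size_comp_poly2 //.
by rewrite size_linear ?invr_eq0.
Qed.

Lemma aut_app_triangularK u :
  aut_app (alpha *: vy K + peval p (vx K)) (beta *: vx K + gamma%:MP) u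
    \mPo inv_triangular = u.
Proof.
rewrite /aut_app comp_mpolyA -[RHS]comp_mpoly_id; congr (u \mPo _).
apply: eq_from_tnth => k; rewrite !tnth_mktuple.
case: k => -[|[|//]] lt_k; rewrite (tnth_nth 0) /=.
- rewrite (_ : Ordinal lt_k = 0); last exact: val_inj.
  rewrite comp_mpolyD comp_mpolyZ peval_comp_mpoly /vx /vy !comp_mpolyXU /=.
  rewrite pevalZ peval_comp_poly peval_linear scalerDr !scalerA.
  by rewrite mulrN mulfV // scale1r scaleN1r subrK.
- rewrite (_ : Ordinal lt_k = 1); last exact: val_inj.
  rewrite comp_mpolyD comp_mpolyZ comp_mpolyC /vx comp_mpolyXU /=.
  rewrite scalerDr scalerA mulfV // scale1r -mul_mpolyC -mpolyCM.
  by rewrite mulrCA mulfV // mulr1 mpolyCN subrK.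
Qed.

End TriangularInverse.

Theorem corollary4p2 (K : fieldType) (u : {mpoly K[2]})
  (alpha beta gamma : K) (p : {poly K}) :
  (forall c : K, u != c%:MP) ->
  alpha != 0 -> beta != 0 -> (2 < size p)%N ->
  let tru := aut_app (alpha *: vy K + peval p (vx K))
                     (beta *: vx K + gamma%:MP) u in
  (biased u -> (tdeg u < tdeg tru)%N) /\
  ((tdeg u < tdeg tru)%N -> (tdeg u <= tdeg tru)%N) /\
  ((tdeg u <= tdeg tru)%N -> biased tru).
Proof.
move=> nonconst_u nz_alpha nz_beta size_p tru.
have tdeg_u := tdeg_gt0 nonconst_u.
have lt_tru : biased u -> (tdeg u < tdeg tru)%N.
  exact: (@tdeg_lt_comp_triangular K 0 1 isT alpha beta gamma p).
split=> //; split=> [/ltnW //|le_tru].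
apply: contraT; rewrite -ltnNge => /ltnW unbiased.
have : (tdeg tru < tdeg (tru \mPo inv_triangular alpha beta gamma p))%N.
  apply: (@tdeg_lt_comp_triangular K 1 0 isT alpha^-1 beta^-1 (- gamma / beta)
           (inv_triangular_poly alpha beta gamma p)).
  all: rewrite ?size_inv_triangular_poly ?invr_neq0 //.
  exact: leq_trans tdeg_u le_tru.
by rewrite /tru aut_app_triangularK // ltnNge le_tru.
Qed.
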